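(* Let $L\ge 2$, let $\Omega\subsetneq\mathbb{Z}_L$ with $|\Omega|=n$, and let $K\ge 2$. Let $\mathfrak{C}=\{\mathcal{C}^0,\dots,\mathcal{C}^{K-1}\}$, where each $\mathcal{C}^i=\{C^i_0,\dots,C^i_{M-1}\}$ is a set of $M$ complex sequences of length $L$, every sequence $C^i_j$ satisfying the spectral constraint: its frequency-domain dual $(\hat c^i_{j,0},\dots,\hat c^i_{j,L-1})$ satisfies $|\hat c^i_{j,k}|^2=\frac{L}{L-n}$ for $k\notin\Omega$ and $\hat c^i_{j,k}=0$ for $k\in\Omega$. Define $\theta_c(\mathfrak{C})=\max\{|\theta_{C^i_l,C^j_m}(\tau)|:0\le i\neq j<K,\ 0\le l,m<M,\ 0\le \tau<L\}$. Then $$\theta_c(\mathfrak{C})\ge\frac{L}{\sqrt{L-n}}.$$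
   Context: $\omega_L=e^{2\pi\sqrt{-1}/L}$. For a length-$L$ sequence $C=(c_0,\dots,c_{L-1})$ its frequency-domain dual is $\widehat C=(\hat c_0,\dots,\hat c_{L-1})$ with $\hat c_k=\frac{1}{\sqrt L}\sum_{t=0}^{L-1}c_t\omega_L^{-tk}$. The periodic cross-correlation of length-$L$ sequences $C,D$ is $\theta_{C,D}(\tau)=\sum_{t=0}^{L-1}c_t d^*_{\langle t+\tau\rangle_L}$, where $\langle\cdot\rangle_L$ is reduction mod $L$. *)

From HB Require Import structures.
From mathcomp Require Import all_boot all_order all_algebra.
From mathcomp Require Import reals trigo.
From mathcomp Require Export complex.
Set Implicit Arguments. Unset Strict Implicit. Unset Printing Implicit Defensive.
Import Order.TTheory GRing.Theory Num.Theory.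
Local Open Scope ring_scope.
Local Open Scope complex_scope.

Definition omega (R : realType) (L : nat) : R[i] :=
  (cos (2 * pi / L%:R)) +i* (sin (2 * pi / L%:R)).

Definition cmod (R : realType) (z : R[i]) : R :=
  Num.sqrt (complex.Re z ^+ 2 + complex.Im z ^+ 2).

Definition cseq (R : realType) (L : nat) := 'I_L -> R[i].

Definition dft (R : realType) (L : nat) (c : cseq R L) (k : 'I_L) : R[i] :=
  ((Num.sqrt (L%:R : R))^-1)%:C *
  \sum_(t < L) c t * (omega R L ^+ (t * k))^-1.

(* <t + tau>_L as an element of 'I_L (L > 0 since 'I_L is inhabited by t) *)
Definition addmod (L : nat) (t : 'I_L) (tau : nat) : 'I_L :=
  Ordinal (ltn_pmod (t + tau) (leq_ltn_trans (leq0n t) (ltn_ord t))).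

Definition pcorr (R : realType) (L : nat) (c d : cseq R L) (tau : nat) : R[i] :=
  \sum_(t < L) c t * Num.conj (d (addmod t tau)).

Definition spectral_constraint (R : realType) (L n : nat) (Om : {set 'I_L})
    (c : cseq R L) : Prop :=
  forall k : 'I_L,
    (k \notin Om -> cmod (dft c k) ^+ 2 = (L%:R / (L - n)%:R : R)) /\
    (k \in Om -> dft c k = 0).

(* theta_c of a family of K sets of M sequences:
   max { |theta_{C^i_l, C^j_m}(tau)| : i <> j, l, m < M, tau < L }
   (all values are >= 0, so taking the max with initial value 0 is harmless
    when the index set is nonempty). *)
Definition thetac (R : realType) (L K M : nat) (C : 'I_K -> 'I_M -> cseq R L) : R :=
  \big[Num.max/0]_(i < K) \big[Num.max/0]_(j < K | i != j)
   \big[Num.max/0]_(l < M) \big[Num.max/0]_(m < M) \big[Num.max/0]_(tau < L)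
     cmod (pcorr (C i l) (C j m) tau).

(* The correlation theorem turns the periodic cross-correlation theta of two
   sequences C, D into the product L * hat c_k * conj(hat d_k) of their
   spectra, so by Parseval
     sum_tau |theta(tau)|^2 = L * sum_k |hat c_k|^2 |hat d_k|^2,
   which the spectral constraint makes L^3 / (L - n).  Hence one of the L
   values |theta(tau)| is at least L / sqrt(L - n); a single pair of sequences
   taken from two different sets already forces the bound. *)

From HB Require Import structures.
From mathcomp Require Import all_boot all_order all_algebra.
From mathcomp Require Import reals trigo complex.
From mathcomp Require Import ring lra.

Set Implicit Arguments.
Unset Strict Implicit.
Unset Printing Implicit Defensive.
Import Order.TTheory GRing.Theory Num.Theory.
Local Open Scope ring_scope.

Lemma sum_expr_unity_root (F : idomainType) (n : nat) (z : F) :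
  z ^+ n = 1 -> z != 1 -> \sum_(i < n) z ^+ i = 0.
Proof.
move=> zn1 z_neq1; have /esym/eqP := subrX1 z n.
by rewrite zn1 subrr mulf_eq0 subr_eq0 (negPf z_neq1) => /eqP.
Qed.

Lemma sum_prim_root_orth (F : fieldType) (n : nat) (z : F) (a b : 'I_n) :
  n.-primitive_root z ->
  \sum_(k < n) z ^+ (a * k) / z ^+ (b * k) = (a == b)%:R *+ n.
Proof.
move=> prim_z.
have z_neq0 : z != 0 by rewrite (prim_root_eq0 prim_z) -lt0n (prim_order_gt0 prim_z).
have -> : \sum_(k < n) z ^+ (a * k) / z ^+ (b * k) =
          \sum_(k < n) (z ^+ a / z ^+ b) ^+ k.
  by apply: eq_bigr => k _; rewrite expr_div_n -!exprM.
have [<-|neq_ab] := eqVneq a b.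
  rewrite divff ?expf_neq0 //; under eq_bigr do rewrite expr1n.
  by rewrite sumr_const card_ord.
rewrite mul0rn; apply: sum_expr_unity_root.
  rewrite expr_div_n -!exprM mulnC [(b * n)%N]mulnC !exprM (prim_expr_order prim_z).
  by rewrite !expr1n divr1.
apply: contra_neq neq_ab => /divr1_eq /eqP.
by rewrite (eq_prim_root_expr prim_z) !modn_small // => /eqP /val_inj.
Qed.

Lemma conjC_unity_root (C : numClosedFieldType) (n : nat) (z : C) :
  (0 < n)%N -> z ^+ n = 1 -> z^* = z^-1.
Proof.
move=> n_gt0 zn1; have /eqP : `|z| ^+ n = 1 by rewrite -normrX zn1 normr1.
by rewrite pexpr_eq1 // => /eqP z1; rewrite invC_norm z1 expr1n invr1 mul1r.
Qed.

Lemma conjC_prim_root_expr (C : numClosedFieldType) (n m : nat) (z : C) :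
  n.-primitive_root z -> (z ^+ m)^* = (z ^+ m)^-1.
Proof.
move=> prim_z; apply: (conjC_unity_root (prim_order_gt0 prim_z)).
by rewrite exprAC (prim_expr_order prim_z) expr1n.
Qed.

Definition fourier (F : nzRingType) (n : nat) (z : F) (x : 'I_n -> F) (k : 'I_n) : F :=
  \sum_(t < n) x t * z ^+ (t * k).

Lemma parseval (C : numClosedFieldType) (n : nat) (z : C) (x : 'I_n -> C) :
  n.-primitive_root z ->
  \sum_(k < n) `|fourier z x k| ^+ 2 = n%:R * \sum_(t < n) `|x t| ^+ 2.
Proof.
move=> prim_z.
transitivity (\sum_(k < n) \sum_(t < n) \sum_(s < n)
                x t * (x s)^* * (z ^+ (t * k) / z ^+ (s * k))).
  apply: eq_bigr => k _; rewrite normCK /fourier rmorph_sum mulr_suml.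
  apply: eq_bigr => t _; rewrite mulr_sumr; apply: eq_bigr => s _.
  by rewrite rmorphM /= (conjC_prim_root_expr _ prim_z) mulrACA.
rewrite exchange_big mulr_sumr; apply: eq_bigr => t _ /=.
rewrite exchange_big (bigD1 t) //= -mulr_sumr sum_prim_root_orth // eqxx.
rewrite big1 ?addr0 => [|s neq_st]; first by rewrite normCK mulr_natr mulr_natl.
by rewrite -mulr_sumr sum_prim_root_orth // eq_sym (negPf neq_st) mul0rn mulr0.
Qed.

Section Correlation.

Variables (R : realType) (L : nat).

Lemma addmod_inj (t : 'I_L) : injective (fun tau : 'I_L => addmod t tau).
Proof.
move=> x y /(congr1 val) /= /eqP; rewrite eqn_modDl !modn_small ?ltn_ord //.
by move=> /eqP /val_inj.
Qed.

Lemma fourier_pcorr (z : R[i]) (c d : cseq R L) (k : 'I_L) :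
  L.-primitive_root z ->
  fourier z (fun tau : 'I_L => pcorr c d tau) k =
  fourier z^-1 c k * (fourier z^-1 d k)^*.
Proof.
move=> prim_z.
have z_neq0 : z != 0 by rewrite (prim_root_eq0 prim_z) -lt0n (prim_order_gt0 prim_z).
have expr_addmod (t tau : 'I_L) :
    z ^+ (addmod t tau * k) = z ^+ (t * k) * z ^+ (tau * k).
  rewrite mulnC exprM /= expr_mod -?exprM ?mulnDr ?exprD ?[(k * _)%N]mulnC //.
  by rewrite exprM (prim_expr_order prim_z) expr1n.
rewrite /fourier /pcorr mulr_suml; under eq_bigr => tau _ do rewrite mulr_suml.
rewrite exchange_big; apply: eq_bigr => t _ /=.
rewrite rmorph_sum mulr_sumr [RHS](reindex_inj (addmod_inj (t:=t))).
apply: eq_bigr => tau _; rewrite rmorphM /= !exprVn.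
rewrite -[X in _ * (_ * X^*)](conjC_prim_root_expr _ prim_z) conjCK expr_addmod.
by field; rewrite expf_neq0.
Qed.

End Correlation.

Section Omega.

Variable R : realType.

Lemma de_moivre (a : R) (m : nat) :
  (cos a +i* sin a)%C ^+ m = (cos (a *+ m) +i* sin (a *+ m))%C.
Proof.
elim: m => [|m IHm]; first by rewrite expr0 mulr0n cos0 sin0.
rewrite exprS IHm mulrS cosD sinD; apply/eqP.
by rewrite eq_complex /= eqxx /= addrC [sin a * _]mulrC.
Qed.

Lemma cos_lt1 (x : R) : 0 < x < pi *+ 2 -> cos x < 1.
Proof.
move=> /andP[x_gt0 x_lt2pi].
have -> : x = (x / 2) *+ 2 by rewrite -mulr_natr divfK ?pnatr_eq0.
have sin_gt0 : 0 < sin (x / 2).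
  by apply: sin_gt0_pi; rewrite divr_gt0 //= ltr_pdivrMr // mulr_natr.
by rewrite cos_mulr2n mulr2n; have := cos2Dsin2 (x / 2); nra.
Qed.

Lemma omega_prim_root (L : nat) : (0 < L)%N -> L.-primitive_root (omega R L).
Proof.
move=> L_gt0; apply/andP; split=> //; apply/forallP => i.
have L_neq0 : (L%:R : R) != 0 by rewrite pnatr_eq0 -lt0n.
rewrite unity_rootE /omega de_moivre.
have -> : 2 * pi / L%:R *+ i.+1 = 2 * pi * i.+1%:R / L%:R :> R.
  by rewrite -mulr_natr mulrAC.
have [-> | iL] := eqVneq i.+1 L.
  by rewrite mulfK // mulr_natl cos2pi sin2pi eqxx.
rewrite eqbF_neg; apply/negP => /eqP [cos1 _].
have arg_bounds : (0 : R) < (2 * pi * i.+1%:R / L%:R : R) < (pi *+ 2 : R).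
  have i_lt_L : (i.+1 < L)%N by rewrite ltn_neqAle iL /=.
  have pi_gt0 := pi_gt0 R.
  apply/andP; split; first by rewrite divr_gt0 ?mulr_gt0 ?ltr0n.
  by rewrite ltr_pdivrMr ?ltr0n // -[pi *+ 2]mulr_natl ltr_pM2l ?ltr_nat // mulr_gt0.
by have := cos_lt1 arg_bounds; rewrite cos1 ltxx.
Qed.

End Omega.

Section Spectrum.

Variables (R : realType) (L : nat).

Lemma cmodE (z : R[i]) : (cmod z)%:C%C = `|z|.
Proof. by rewrite normc_def. Qed.

Lemma fourier_dft (x : cseq R L) (k : 'I_L) :
  fourier (omega R L)^-1 x k = (Num.sqrt L%:R)%:C%C * dft x k.
Proof.
have L_gt0 : (0 < L)%N by apply: leq_ltn_trans (ltn_ord k).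
have sqrtL_neq0 : Num.sqrt (L%:R : R) != 0 by rewrite sqrtr_eq0 -ltNge ltr0n.
rewrite /dft mulrA -rmorphM divff // rmorph1 mul1r.
by apply: eq_bigr => t _; rewrite exprVn.
Qed.

Lemma normC_fourier_dft (x : cseq R L) (k : 'I_L) :
  `|fourier (omega R L)^-1 x k| ^+ 2 = L%:R * `|dft x k| ^+ 2.
Proof.
rewrite fourier_dft normrM exprMn ger0_norm ?ler0c ?sqrtr_ge0 //.
by rewrite -rmorphXn sqr_sqrtr ?ler0n // rmorph_nat.
Qed.

Lemma spectral_constraint_normC (n : nat) (Om : {set 'I_L}) (x : cseq R L)
    (k : 'I_L) :
  spectral_constraint n Om x ->
  `|dft x k| ^+ 2 = if k \in Om then 0 else L%:R / (L - n)%:R.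
Proof.
move=> /(_ k) [dft_out dft_in]; case: ifP => [/dft_in -> | /negbT /dft_out].
  by rewrite normr0 expr0n.
by rewrite -cmodE -rmorphXn => ->; rewrite fmorph_div !rmorph_nat.
Qed.

Lemma sum_cmod_pcorr_sqr (n : nat) (Om : {set 'I_L}) (c d : cseq R L) :
  (n < L)%N -> #|Om| = n ->
  spectral_constraint n Om c -> spectral_constraint n Om d ->
  \sum_(tau < L) cmod (pcorr c d tau) ^+ 2 = L%:R ^+ 3 / (L - n)%:R.
Proof.
move=> n_lt_L card_Om c_spec d_spec.
have L_gt0 : (0 < L)%N by apply: leq_ltn_trans n_lt_L.
have prim_omega := omega_prim_root R L_gt0.
have card_notOm : #|~: Om| = (L - n)%N.
  by move: (cardsC Om); rewrite card_ord card_Om => /(canRL (addKn n)).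
have L_neq0 : L%:R != 0 :> R[i] by rewrite pnatr_eq0 -lt0n.
have Ln_neq0 : (L - n)%:R != 0 :> R[i] by rewrite pnatr_eq0 subn_eq0 -ltnNge.
apply: complexI; rewrite fmorph_div rmorphXn !rmorph_nat.
transitivity (\sum_(tau < L) `|pcorr c d tau| ^+ 2).
  by rewrite rmorph_sum; apply: eq_bigr => tau _; rewrite -cmodE rmorphXn.
apply: (mulfI L_neq0); rewrite -(parseval _ prim_omega).
transitivity (\sum_(k in ~: Om) (L%:R * (L%:R / (L - n)%:R)) ^+ 2 : R[i]).
  rewrite [RHS]big_mkcond; apply: eq_bigr => k _.
  rewrite fourier_pcorr // normrM norm_conjC exprMn !normC_fourier_dft.
  rewrite (spectral_constraint_normC k c_spec) (spectral_constraint_normC k d_spec) inE.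
  by case: (k \in Om); rewrite ?mulr0 ?expr2.
by rewrite sumr_const card_notOm -mulr_natr; field.
Qed.

End Spectrum.

Lemma cmod_pcorr_le_thetac (R : realType) (L K M : nat)
    (C : 'I_K -> 'I_M -> cseq R L) (i j : 'I_K) (l m : 'I_M) (tau : 'I_L) :
  i != j -> cmod (pcorr (C i l) (C j m) tau) <= thetac C.
Proof.
move=> neq_ij; apply: le_trans (le_bigmax _ _ i).
apply: le_trans (le_bigmax_cond _ (P := fun j => i != j) _ neq_ij).
apply: le_trans (le_bigmax _ _ l); apply: le_trans (le_bigmax _ _ m).
exact: le_bigmax.
Qed.

Theorem theorem2 (R : realType) (L n K M : nat) (Om : {set 'I_L})
  (C : 'I_K -> 'I_M -> cseq R L) :
  (2 <= L)%N -> Om \proper [set: 'I_L] -> #|Om| = n ->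
  (2 <= K)%N -> (0 < M)%N ->
  (forall (i : 'I_K) (j : 'I_M), spectral_constraint n Om (C i j)) ->
  thetac C >= L%:R / Num.sqrt ((L - n)%:R).
Proof.
move=> L_ge2 Om_proper card_Om K_ge2 M_gt0 spec.
have n_lt_L : (n < L)%N.
  by rewrite -card_Om; move/proper_card: Om_proper; rewrite cardsT card_ord.
pose i0 : 'I_K := Ordinal (ltnW K_ge2); pose i1 : 'I_K := Ordinal K_ge2.
pose l0 : 'I_M := Ordinal M_gt0.
have corr_le (tau : 'I_L) : cmod (pcorr (C i0 l0) (C i1 l0) tau) <= thetac C.
  exact: cmod_pcorr_le_thetac.
have theta_ge0 : 0 <= thetac C.
  by apply: le_trans (corr_le (Ordinal (ltnW L_ge2))); apply: sqrtr_ge0.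
have energy_le : L%:R ^+ 3 / (L - n)%:R <= L%:R * thetac C ^+ 2.
  rewrite -(sum_cmod_pcorr_sqr n_lt_L card_Om (spec i0 l0) (spec i1 l0)).
  rewrite -[L in L%:R * _]card_ord mulr_natl -sumr_const.
  by apply: ler_sum => tau _; rewrite lerXn2r ?nnegrE ?sqrtr_ge0 ?corr_le.
have L_gt0 : (0 : R) < L%:R by rewrite ltr0n ltnW.
rewrite -(ler_pXn2r (isT : (0 < 2)%N)) ?nnegrE ?divr_ge0 ?sqrtr_ge0 ?ler0n //.
by rewrite expr_div_n sqr_sqrtr ?ler0n // -(ler_pM2l L_gt0) mulrA -exprS.
Qed.
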